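(* Let $(X,\to)$ be a transition system over $A$. For every congruence $R\subseteq\mathcal P(X)\times\mathcal P(X)$ and $X_1,X_2\subseteq X$: $(X_1,X_2)\in\beta_t(R)$ iff ($X_1=\emptyset\iff X_2=\emptyset$) and $\delta_a[X_1]\mathrel R\delta_a[X_2]$ for all $a\in A$. The restriction of $\beta_t$ to congruences is continuous, independent of the branching type of the transition system.
   Context: $\delta_a[Y]=\{x'\mid\exists y\in Y\colon y\xrightarrow{a}x'\}$; $\Diamond_a(S)=\{x\mid\exists x'\in S\colon x\xrightarrow{a}x'\}$. A congruence is an equivalence $R$ on $\mathcal P(X)$ with $X_i\mathrel RY_i$ ($i\in I$) implying $\bigcup_iX_i\mathrel R\bigcup_iY_i$. $\alpha_t(\mathcal S)=\{(X_1,X_2)\mid\forall S\in\mathcal S\colon(X_1\cap S\neq\emptyset\iff X_2\cap S\neq\emptyset)\}$, $\gamma_t(R)=\{S\subseteq X\mid\forall(X_1,X_2)\in R\colon(X_1\cap S\neq\emptyset\iff X_2\cap S\neq\emptyset)\}$, $\mathit{lo}_t(\mathcal S)=\bigcup_{a\in A}\{\Diamond_a(S)\mid S\in\mathcal S\}\cup\{X\}$, $\beta_t=\alpha_t\circ\mathit{lo}_t\circ\gamma_t$ on the lattice $(\mathit{Eq}(\mathcal P(X)),\supseteq)$ of equivalences on $\mathcal P(X)$; continuity means preservation of suprema (in this order, intersections) of well-ordered chains. *)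

Section Defs.
Context {X A : Type} (step : X -> A -> X -> Prop).

Definition pset := X -> Prop.
Definition prel := pset -> pset -> Prop.

Definition delta (a : A) (Y : pset) : pset :=
  fun x' => exists y, Y y /\ step y a x'.

Definition diamond (a : A) (S : pset) : pset :=
  fun x => exists x', S x' /\ step x a x'.

Definition meets (Y S : pset) : Prop := exists x, Y x /\ S x.

Definition is_equiv (R : prel) : Prop :=
  (forall Y, R Y Y) /\ (forall Y Z, R Y Z -> R Z Y) /\
  (forall Y Z W, R Y Z -> R Z W -> R Y W).

Definition congruence (R : prel) : Prop :=
  is_equiv R /\
  forall (I : Type) (F G : I -> pset), (forall i, R (F i) (G i)) ->
    R (fun x => exists i, F i x) (fun x => exists i, G i x).

Definition alpha_t (SS : pset -> Prop) : prel :=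
  fun X1 X2 => forall S, SS S -> (meets X1 S <-> meets X2 S).

Definition gamma_t (R : prel) : pset -> Prop :=
  fun S => forall X1 X2, R X1 X2 -> (meets X1 S <-> meets X2 S).

(* lo_t(SS) = { Diamond_a(S) | a in A, S in SS } \cup { X }
   (membership stated up to extensional equality of subsets) *)
Definition lo_t (SS : pset -> Prop) : pset -> Prop :=
  fun T => (exists a S, SS S /\ forall x, T x <-> diamond a S x)
           \/ (forall x, T x).

Definition beta_t (R : prel) : prel := alpha_t (lo_t (gamma_t R)).

(* intersection of a family of relations (supremum in (Eq(P(X)), ⊇)) *)
Definition rel_inter (C : prel -> Prop) : prel :=
  fun X1 X2 => forall R, C R -> R X1 X2.

(* C is a nonempty well-ordered chain of congruences in (Eq(P(X)), ⊇):
   every nonempty subfamily has a least element w.r.t. ⊇,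
   i.e. a member containing all other members. *)
Definition wo_chain_of_congruences (C : prel -> Prop) : Prop :=
  (exists R, C R) /\
  (forall R, C R -> congruence R) /\
  (forall R S, C R -> C S ->
     (forall Y Z, R Y Z -> S Y Z) \/ (forall Y Z, S Y Z -> R Y Z)) /\
  (forall D : prel -> Prop, (forall R, D R -> C R) -> (exists R, D R) ->
     exists R, D R /\ forall S, D S -> forall Y Z, S Y Z -> R Y Z).

End Defs.

From Stdlib Require Import Classical FunctionalExtensionality PropExtensionality.

(* alpha_t o gamma_t is the identity on congruences.  If no set of gamma_t(R)
   separates Y and Z, let U be the union of the R-class of Y; U is in that class
   and is R-saturated (X1 R X2 with X2 below U gives X1 u U R X2 u U = U), so
   its complement lies in gamma_t(R).  Y misses it, hence so does Z, and
   Y u Z R U u Z = U R Y; symmetrically Y u Z R Z.  The characterization of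
   beta_t follows through meets Y (diamond a S) <-> meets (delta a Y) S, and
   continuity because it is pointwise in R. *)

Lemma pset_ext {X : Type} (Y Z : @pset X) : (forall x, Y x <-> Z x) -> Y = Z.
Proof.
intro YZ; apply functional_extensionality; intro x.
apply propositional_extensionality; apply YZ.
Qed.

Section Congruence.

Context {X : Type}.
Variable R : @prel X.
Hypothesis congR : congruence R.

Lemma congruence_refl Y : R Y Y.
Proof. destruct congR as [[refl _] _]; apply refl. Qed.

Lemma congruence_sym Y Z : R Y Z -> R Z Y.
Proof. destruct congR as [[_ [sym _]] _]; apply sym. Qed.

Lemma congruence_trans Y Z W : R Y Z -> R Z W -> R Y W.
Proof. destruct congR as [[_ [_ trans]] _]; apply trans. Qed.

Lemma congruence_ext Y Z Y' Z' :
  R Y Z -> (forall x, Y x <-> Y' x) -> (forall x, Z x <-> Z' x) -> R Y' Z'.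
Proof.
intros YZ YY' ZZ'.
rewrite <- (pset_ext _ _ YY'), <- (pset_ext _ _ ZZ'); exact YZ.
Qed.

Lemma congruence_union2 Y1 Z1 Y2 Z2 :
  R Y1 Z1 -> R Y2 Z2 -> R (fun x => Y1 x \/ Y2 x) (fun x => Z1 x \/ Z2 x).
Proof.
intros R1 R2.
assert (union_or : forall P Q : @pset X,
  forall x, (exists b : bool, (if b then P else Q) x) <-> P x \/ Q x).
{ intros P Q x; split.
  - intros [[|] Hx]; auto.
  - intros [Hx | Hx]; [exists true | exists false]; exact Hx. }
eapply congruence_ext; [| apply union_or | apply union_or].
apply congR; intros [|]; assumption.
Qed.

Definition class_top (Y : pset) : pset := fun x => exists W, R W Y /\ W x.

Lemma class_top_rel Y : R (class_top Y) Y.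
Proof.
eapply congruence_ext with
  (Y := fun x => exists i : {W | R W Y}, proj1_sig i x)
  (Z := fun x => exists i : {W | R W Y}, Y x).
- apply congR; intros [W RWY]; exact RWY.
- intro x; split.
  + intros [[W RWY] Wx]; exists W; auto.
  + intros [W [RWY Wx]]; exists (exist _ W RWY); exact Wx.
- intro x; split.
  + intros [_ Yx]; exact Yx.
  + intro Yx; exists (exist (fun W => R W Y) Y (congruence_refl Y)); exact Yx.
Qed.

Lemma class_top_saturated Y X1 X2 :
  R X1 X2 -> (forall x, X2 x -> class_top Y x) -> forall x, X1 x -> class_top Y x.
Proof.
intros R12 X2_sub x X1x.
set (U := class_top Y).
assert (RU : R (fun x => X1 x \/ U x) U).
{ eapply congruence_ext.
  - apply (congruence_union2 _ _ U U R12 (congruence_refl U)).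
  - intro; tauto.
  - intro y; specialize (X2_sub y); tauto. }
exists (fun x => X1 x \/ U x); split; auto.
exact (congruence_trans _ _ _ RU (class_top_rel Y)).
Qed.

Lemma gamma_t_compl_class_top Y : gamma_t R (fun x => ~ class_top Y x).
Proof.
assert (meets_out : forall X1 X2, R X1 X2 ->
          meets X1 (fun x => ~ class_top Y x) -> meets X2 (fun x => ~ class_top Y x)).
{ intros X1 X2 R12 [x [X1x outx]]; apply NNPP; intro X2_in.
  apply outx; refine (class_top_saturated Y X1 X2 R12 _ x X1x).
  intros y X2y; apply NNPP; intro outy; apply X2_in; exists y; auto. }
intros X1 X2 R12; split; apply meets_out; auto using congruence_sym.
Qed.

Lemma alpha_gamma_union Y Z :
  alpha_t (gamma_t R) Y Z -> R (fun x => Y x \/ Z x) Y.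
Proof.
intro YZ.
assert (Z_sub : forall x, Z x -> class_top Y x).
{ intros x Zx; apply NNPP; intro outx.
  destruct (proj2 (YZ _ (gamma_t_compl_class_top Y)) (ex_intro _ x (conj Zx outx)))
    as [y [Yy outy]].
  apply outy; exists Y; split; [apply congruence_refl | exact Yy]. }
apply congruence_trans with (Z := class_top Y); [| apply class_top_rel].
eapply congruence_ext.
- apply (congruence_union2 _ _ Z Z (congruence_sym _ _ (class_top_rel Y))
                           (congruence_refl Z)).
- intro; tauto.
- intro x; specialize (Z_sub x); tauto.
Qed.

Lemma alpha_gamma_congruence Y Z : alpha_t (gamma_t R) Y Z -> R Y Z.
Proof.
intro YZ.
assert (ZY : alpha_t (gamma_t R) Z Y) by (intros S gS; symmetry; apply YZ, gS).
apply congruence_trans with (Z := fun x => Y x \/ Z x).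
- apply congruence_sym, alpha_gamma_union, YZ.
- eapply congruence_ext; [apply (alpha_gamma_union _ _ ZY) | |]; intro; tauto.
Qed.

End Congruence.

Section TransitionSystem.

Context {X A : Type}.
Variable step : X -> A -> X -> Prop.

Lemma meets_diamond (Y S : @pset X) a :
  meets Y (diamond step a S) <-> meets (delta step a Y) S.
Proof.
split.
- intros [x [Yx [x' [Sx' st]]]]; exists x'; split; [exists x |]; auto.
- intros [x' [[x [Yx st]] Sx']]; exists x; split; [| exists x']; auto.
Qed.

Lemma meets_full (Y T : @pset X) : (forall x, T x) -> (meets Y T <-> ~ forall x, ~ Y x).
Proof.
intro T_full; split.
- intros [x [Yx _]] Y_empty; exact (Y_empty x Yx).
- intro Y_nonempty; apply NNPP; intro no_meet.
  apply Y_nonempty; intros x Yx; apply no_meet; exists x; auto.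
Qed.

Lemma beta_t_congruence (R : @prel X) (X1 X2 : @pset X) : congruence R ->
  beta_t step R X1 X2 <->
  (((forall x, ~ X1 x) <-> (forall x, ~ X2 x)) /\
   forall a, R (delta step a X1) (delta step a X2)).
Proof.
intro congR; split.
- intro beta12; split.
  + assert (full : lo_t step (gamma_t R) (fun _ => True)) by (right; auto).
    pose proof (beta12 _ full) as meets12.
    rewrite !(meets_full _ (fun _ => True)) in meets12 by auto.
    split; intro empty; apply NNPP; intro nonempty; apply meets12 in nonempty; auto.
  + intro a; apply alpha_gamma_congruence; auto.
    intros S gS; rewrite <- !meets_diamond.
    apply beta12; left; exists a, S; split; [exact gS | intro; tauto].
- intros [empty12 delta12] T [[a [S [gS TS]]] | T_full].
  + rewrite (pset_ext _ _ TS), !meets_diamond; apply gS, delta12.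
  + rewrite !(meets_full _ _ T_full); tauto.
Qed.

End TransitionSystem.

Lemma rel_inter_congruence {X : Type} (C : @prel X -> Prop) :
  (forall R, C R -> congruence R) -> congruence (rel_inter C).
Proof.
intro congC; split; [split; [| split] |].
- intros Y R CR; exact (congruence_refl R (congC R CR) Y).
- intros Y Z YZ R CR; exact (congruence_sym R (congC R CR) _ _ (YZ R CR)).
- intros Y Z W YZ ZW R CR.
  exact (congruence_trans R (congC R CR) _ _ _ (YZ R CR) (ZW R CR)).
- intros I F G FG R CR; apply (congC R CR); intro i; apply FG, CR.
Qed.

Lemma beta_t_rel_inter {X A : Type} (step : X -> A -> X -> Prop)
    (C : @prel X -> Prop) X1 X2 :
  (exists R, C R) -> (forall R, C R -> congruence R) ->
  beta_t step (rel_inter C) X1 X2 <-> (forall R, C R -> beta_t step R X1 X2).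
Proof.
intros [R0 CR0] congC.
rewrite beta_t_congruence by (apply rel_inter_congruence, congC).
split.
- intros [empty12 delta12] R CR.
  apply beta_t_congruence; auto; split; auto.
  intro a; apply delta12, CR.
- intro beta12; split.
  + apply (beta_t_congruence step R0); auto.
  + intros a R CR; apply (beta_t_congruence step R); auto.
Qed.

Theorem mainTheorem12 (X A : Type) (step : X -> A -> X -> Prop) :
  (forall R : prel, congruence R ->
     forall X1 X2 : pset,
       beta_t step R X1 X2 <->
       (((forall x, ~ X1 x) <-> (forall x, ~ X2 x)) /\
        forall a : A, R (delta step a X1) (delta step a X2)))
  /\
  (forall C : prel -> Prop, wo_chain_of_congruences C ->
     forall X1 X2 : pset,
       beta_t step (rel_inter C) X1 X2 <->
       (forall R, C R -> beta_t step R X1 X2)).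
Proof.
split.
- intros R congR X1 X2; exact (beta_t_congruence step R X1 X2 congR).
- intros C [nonempty [congC _]] X1 X2.
  exact (beta_t_rel_inter step C X1 X2 nonempty congC).
Qed.
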